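(* Let $\mathcal P$ be a 2-reflex orthostack made of three bricks with canonical contact rectangles and signature $\sqcap_i\sqcup_j$ for some types $i,j\in\{1,2,3,4\}$. Then $\mathcal P$ is guarded by a single vertical closed face guard (indeed, by any vertical face of the middle brick).
   Context: A 2-reflex orthostack is an orthogonal polyhedron with no reflex edge parallel to the vertical ($z$) axis all of whose horizontal cross-sections are simply connected; it is a stack of bricks $B_t=R_t\times[z_{t-1},z_t]$, $t=1,\dots,k$ (bottom to top), $z_0<\dots<z_k$, each $R_t$ an axis-parallel rectangle, $R_t\ne R_{t+1}$. The contact rectangle between $B_t$ and $B_{t+1}$ is $(R_t\cap R_{t+1})\times\{z_t\}$; it is canonical if one of $R_t,R_{t+1}$ is strictly contained in the other and their set difference is connected. The type of a canonical contact rectangle is the number $i\in\{1,2,3,4\}$ of sides of the smaller rectangle not contained in the boundary of the larger one. The contact is denoted $\sqcup_i$ if $R_t\subsetneq R_{t+1}$ and $\sqcap_i$ if $R_{t+1}\subsetneq R_t$. The signature is the sequence of these symbols for $t=1,\dots,k-1$, read bottom to top. A point $x$ is visible to $y$ if segment $xy$ does not meet the exterior of the polyhedron; a closed face guard is a face including its boundary; it guards the polyhedron if every point is visible from some point of it. A face is vertical if parallel to the $z$-axis. *)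

From Stdlib Require Import Reals.
Open Scope R_scope.

Definition pt2 : Type := (R * R)%type.
Definition pt3 : Type := (R * R * R)%type.

Record rect : Type := mkRect {
  xl : R; xh : R; yl : R; yh : R;
  xlt : xl < xh; ylt : yl < yh }.

Definition in_rect (r : rect) (p : pt2) : Prop :=
  xl r <= fst p <= xh r /\ yl r <= snd p <= yh r.

Definition rect_strict_sub (r s : rect) : Prop :=
  (forall p, in_rect r p -> in_rect s p) /\ exists p, in_rect s p /\ ~ in_rect r p.

Definition open2 (U : pt2 -> Prop) : Prop :=
  forall p, U p -> exists e, 0 < e /\
    forall q, Rabs (fst q - fst p) < e -> Rabs (snd q - snd p) < e -> U q.

Definition connected2 (S : pt2 -> Prop) : Prop :=
  ~ exists U V : pt2 -> Prop, open2 U /\ open2 V /\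
      (forall p, S p -> U p \/ V p) /\
      (exists p, S p /\ U p) /\ (exists p, S p /\ V p) /\
      (forall p, S p -> U p -> V p -> False).

Definition canonical_pair (small big : rect) : Prop :=
  rect_strict_sub small big /\
  connected2 (fun p => in_rect big p /\ ~ in_rect small p).

(** Contact symbols: sqcap (R_{t+1} strictly inside R_t) and sqcup
    (R_t strictly inside R_{t+1}), both canonical. *)
Definition sqcap_contact (Rt Rt1 : rect) : Prop := canonical_pair Rt1 Rt.
Definition sqcup_contact (Rt Rt1 : rect) : Prop := canonical_pair Rt Rt1.

Definition in_brick (r : rect) (zlo zhi : R) (p : pt3) : Prop :=
  in_rect r (fst (fst p), snd (fst p)) /\ zlo <= snd p <= zhi.

Definition stack3 (R1 R2 R3 : rect) (z0 z1 z2 z3 : R) (p : pt3) : Prop :=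
  in_brick R1 z0 z1 p \/ in_brick R2 z1 z2 p \/ in_brick R3 z2 z3 p.

Definition seg_pt (x y : pt3) (t : R) : pt3 :=
  (fst (fst x) + t * (fst (fst y) - fst (fst x)),
   snd (fst x) + t * (snd (fst y) - snd (fst x)),
   snd x + t * (snd y - snd x)).

Definition visible (P : pt3 -> Prop) (x y : pt3) : Prop :=
  forall t, 0 <= t <= 1 -> P (seg_pt x y t).

Definition guards (P : pt3 -> Prop) (G : pt3 -> Prop) : Prop :=
  forall x, P x -> exists g, G g /\ visible P x g.

Inductive side : Type := West | East | South | North.

Definition brick_vface (r : rect) (zlo zhi : R) (s : side) (p : pt3) : Prop :=
  in_brick r zlo zhi p /\
  match s with
  | West => fst (fst p) = xl r
  | East => fst (fst p) = xh r
  | South => snd (fst p) = yl r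
  | North => snd (fst p) = yh r
  end.

From Stdlib Require Import Reals Lra Psatz.
Open Scope R_scope.

(** The signature [sqcap sqcup] says that the middle rectangle
    R2 is contained in both R1 and R3, so the middle brick is the "waist" of
    the stack.  A vertical face of the middle brick contains a vertical edge
    of it, above a corner c of R2; since c lies in R1, R2 and R3, the point
    (c, z1) lies in the two convex bricks B1 and B2, and (c, z2) lies in B2
    and B3.  A point of a convex set sees every point of that set, so every
    point of B1 or B2 sees (c, z1) and every point of B3 sees (c, z2). *)

Lemma interval_convex (lo hi a b t : R) :
  lo <= a <= hi -> lo <= b <= hi -> 0 <= t <= 1 -> lo <= a + t * (b - a) <= hi.
Proof. intros; split; nra. Qed.

Lemma brick_convex (r : rect) (lo hi : R) (x y : pt3) (t : R) :
  in_brick r lo hi x -> in_brick r lo hi y -> 0 <= t <= 1 ->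
  in_brick r lo hi (seg_pt x y t).
Proof.
  destruct x as [[x1 x2] x3], y as [[y1 y2] y3].
  unfold in_brick, in_rect, seg_pt; simpl.
  intros [[Hx1 Hx2] Hx3] [[Hy1 Hy2] Hy3] Ht.
  split; [split|]; apply interval_convex; assumption.
Qed.

Lemma visible_in_brick (P : pt3 -> Prop) (r : rect) (lo hi : R) (x y : pt3) :
  (forall p, in_brick r lo hi p -> P p) ->
  in_brick r lo hi x -> in_brick r lo hi y -> visible P x y.
Proof.
  intros HP Hx Hy t Ht. apply HP, brick_convex; assumption.
Qed.

Definition side_corner (r : rect) (s : side) : pt2 :=
  match s with
  | West | South => (xl r, yl r)
  | East | North => (xh r, yh r)
  end.

Lemma side_corner_in_rect (r : rect) (s : side) : in_rect r (side_corner r s).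
Proof.
  pose proof (xlt r); pose proof (ylt r).
  unfold in_rect; destruct s; simpl; lra.
Qed.

Lemma side_corner_on_face (r : rect) (lo hi z : R) (s : side) :
  lo <= z <= hi ->
  brick_vface r lo hi s (fst (side_corner r s), snd (side_corner r s), z).
Proof.
  intros Hz. split.
  - split; [exact (side_corner_in_rect r s) | exact Hz].
  - destruct s; reflexivity.
Qed.

Lemma rect_strict_sub_incl (r s : rect) (p : pt2) :
  rect_strict_sub r s -> in_rect r p -> in_rect s p.
Proof. intros [Hsub _]; apply Hsub. Qed.

Theorem mainTheorem8 :
  forall (R1 R2 R3 : rect) (z0 z1 z2 z3 : R),
    z0 < z1 -> z1 < z2 -> z2 < z3 ->
    sqcap_contact R1 R2 -> sqcup_contact R2 R3 ->
    forall s : side, guards (stack3 R1 R2 R3 z0 z1 z2 z3) (brick_vface R2 z1 z2 s).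
Proof.
  intros R1 R2 R3 z0 z1 z2 z3 H01 H12 H23 [H21 _] [H23' _] s x Hx.
  set (P := stack3 R1 R2 R3 z0 z1 z2 z3).
  set (c := side_corner R2 s).
  assert (Hc2 : in_rect R2 c) by apply side_corner_in_rect.
  assert (Hc1 : in_rect R1 c) by exact (rect_strict_sub_incl _ _ _ H21 Hc2).
  assert (Hc3 : in_rect R3 c) by exact (rect_strict_sub_incl _ _ _ H23' Hc2).
  assert (Hlow : brick_vface R2 z1 z2 s (fst c, snd c, z1))
    by (apply side_corner_on_face; lra).
  assert (Hhigh : brick_vface R2 z1 z2 s (fst c, snd c, z2))
    by (apply side_corner_on_face; lra).
  destruct Hx as [Hx | [Hx | Hx]].
  - exists (fst c, snd c, z1); split; [exact Hlow|].
    apply (visible_in_brick P R1 z0 z1); [intros p Hp; now left | exact Hx |].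
    split; [exact Hc1 | simpl; lra].
  - exists (fst c, snd c, z1); split; [exact Hlow|].
    apply (visible_in_brick P R2 z1 z2); [intros p Hp; now right; left | exact Hx |].
    split; [exact Hc2 | simpl; lra].
  - exists (fst c, snd c, z2); split; [exact Hhigh|].
    apply (visible_in_brick P R3 z2 z3); [intros p Hp; now right; right | exact Hx |].
    split; [exact Hc3 | simpl; lra].
Qed.
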